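(* Applied to the Double Coverage algorithm on the line, the transformation described below, using upon each request $r_i$ the $r_i$-canonical matching, produces a lazy, local and monotone $k$-server algorithm.
   Context: $k$-server on the real line with $d(x,y)=|x-y|$: $k$ servers at initial points; requests arrive online and must be served by moving a server to the request; cost is total distance moved. Double Coverage (DC): on request $r$, let $s_L,s_R$ be the servers immediately to the left and right of $r$ (if one does not exist, ignore it); move both toward $r$ by $\min\{d(s_L,r),d(s_R,r)\}$; serve $r$ with the server that reached it. A server $s$ in configuration $S$ is adjacent to a point $v$ if no other server of $S$ lies on the segment between $v$ and $s$. An algorithm is lazy if on each request it moves only one server, to the request; local if it always serves a request with an adjacent server; monotone if whenever it would serve a request at $r$ with server $s$, it would also serve a request at any point between $r$ and $s$ with $s$. For sorted sets $X=\{x_1\le\dots\le x_k\}$, $Y=\{y_1\le\dots\le y_k\}$, the canonical matching matches $x_i$ with $y_i$. For $r\in X$, the $r$-canonical matching is obtained from the canonical matching as follows: if $r$ is matched to $y$ and other points of $Y$ lie between $r$ and $y$, let $y'$ be the one closest to $r$, with $y'$ matched to $x$; rematch $r$ with $y'$ and $x$ with $y$. Transformation: $A'$ starts in the same configuration as DC; upon request $r_i$, let $S_{DC}$ be DC's configuration after serving $r_i$ and $S_{A'}$ the configuration of $A'$ just before; compute the $r_i$-canonical matching of $S_{DC}$ to $S_{A'}$ and serve $r_i$ with the server of $A'$ matched to $r_i$. *)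

(* Points of the line live in an arbitrary real field R
   (in particular the reals); d(x,y) = `|x - y|. *)
From HB Require Import structures.
From mathcomp Require Import all_boot all_order all_algebra.
Set Implicit Arguments. Unset Strict Implicit. Unset Printing Implicit Defensive.
Import Order.TTheory GRing.Theory Num.Theory.
Local Open Scope ring_scope.

Section KServer.
Variable R : realFieldType.

(* A configuration of k servers is a multiset of points, represented by a
   sequence of length k (order irrelevant). *)

Definition seq_max (s : seq R) : R := foldr Num.max (head 0 s) s.
Definition seq_min (s : seq R) : R := foldr Num.min (head 0 s) s.

Definition move1 (S : seq R) (a b : R) : seq R := set_nth 0 S (index a S) b.

Definition between (a b z : R) : bool := (Num.min a b <= z) && (z <= Num.max a b).

Definition dc_step (S : seq R) (r : R) : seq R :=
  if r \in S then S else
  let L := [seq s <- S | s < r] in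
  let Rs := [seq s <- S | r < s] in
  if L is [::] then move1 S (seq_min Rs) r
  else if Rs is [::] then move1 S (seq_max L) r
  else let sL := seq_max L in let sR := seq_min Rs in
       let d := Num.min (r - sL) (sR - r) in
       move1 (move1 S sL (sL + d)) sR (sR - d).

(* Matchings between sorted xs = x_0 <= ... <= x_{k-1} and sorted
   ys = y_0 <= ... <= y_{k-1} are given as maps on indices: i |-> j means
   x_i is matched with y_j. *)
Definition canonical_matching : nat -> nat := id.

(* The r-canonical matching (r a point of xs; we use its first occurrence). *)
Definition rcanonical_matching (xs ys : seq R) (r : R) : nat -> nat :=
  let i0 := index r xs in
  let y := nth 0 ys (canonical_matching i0) in
  let cands := [seq j <- iota 0 (size ys)
               | (j != canonical_matching i0) && between r y (nth 0 ys j)] in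
  let dist j := `|nth 0 ys j - r| in
  if cands is j1 :: _ then
    let j := foldr (fun j b => if dist j < dist b then j else b) j1 cands in
    (* y' = y_j is closest to r; it was matched to x = x_{j}; rematch
       r with y' and x with y *)
    fun i => if i == i0 then j
             else if i == j then canonical_matching i0
             else canonical_matching i
  else canonical_matching.

Definition rmatched (X A : seq R) (r : R) : R :=
  let xs := sort <=%R X in
  let ys := sort <=%R A in
  nth 0 ys (rcanonical_matching xs ys r (index r xs)).

(* The transformed algorithm A'.  State: (DC configuration, A' configuration). *)
Definition Aprime_server (D A : seq R) (r : R) : R := rmatched (dc_step D r) A r.

Definition trans_step (st : seq R * seq R) (r : R) : seq R * seq R :=
  (dc_step st.1 r, move1 st.2 (Aprime_server st.1 st.2 r) r).

Definition trans_run (S0 : seq R) (rs : seq R) : seq R * seq R :=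
  foldl trans_step (S0, S0) rs.

Definition lazy_step (A A' : seq R) (r : R) : Prop :=
  exists2 s, s \in A & perm_eq A' (r :: rem s A).

Definition adjacent (S : seq R) (v s : R) : Prop :=
  s \in S /\ forall t, t \in S -> t != s -> ~~ between v s t.

Definition monotone_at (D A : seq R) : Prop :=
  forall r r', between r (Aprime_server D A r) r' ->
    Aprime_server D A r' = Aprime_server D A r.

End KServer.

From mathcomp Require Import all_boot all_order all_algebra.
From mathcomp Require Import zify lra.
Import Order.TTheory GRing.Theory Num.Theory.
Set Implicit Arguments.
Unset Strict Implicit.
Unset Printing Implicit Defensive.

Local Open Scope ring_scope.

(* A' serves r with the server of A' nearest to r among those lying between r
   and y(r), the server of A' whose rank is the number m(r) of DC servers left
   of r once DC has served r.  DC moves at most one server from the left of r onto r, and none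
   when no DC server lies in [r, r'), so m, and with it y, is nondecreasing.
   Hence if r' lies between r and the chosen server s, then s still lies
   between r' and y(r'), while the server chosen for r' lies between r and
   y(r); nearness in both directions forces the two servers to coincide. *)

Lemma perm_set_nth_index (T : eqType) (x0 : T) (S : seq T) (a b : T) :
  a \in S -> perm_eq (set_nth x0 S (index a S) b) (b :: rem a S).
Proof.
elim: S => //= c S IH; rewrite inE; have [-> //|ca] := eqVneq c a.
move=> /IH; rewrite -(perm_cons c) => /perm_trans; apply.
by rewrite (perm_catCA [:: c] [:: b]).
Qed.

Lemma foldr_max_mem {d} {T : orderType d} (z : T) (t : seq T) :
  foldr Order.max z t \in z :: t.
Proof.
elim: t => [|a t IH] /=; first exact: mem_head.
rewrite maxEle; case: ifP => _; last by rewrite !inE eqxx orbT.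
by move: IH; rewrite !inE => /orP [->|->]; rewrite ?orbT.
Qed.

Lemma foldr_min_mem {d} {T : orderType d} (z : T) (t : seq T) :
  foldr Order.min z t \in z :: t.
Proof.
elim: t => [|a t IH] /=; first exact: mem_head.
rewrite minEle; case: ifP => _; first by rewrite !inE eqxx orbT.
by move: IH; rewrite !inE => /orP [->|->]; rewrite ?orbT.
Qed.

Section ArgMin.
Variables (I : eqType) (d : Order.disp_t) (T : orderType d) (f : I -> T).

Definition foldr_argmin (z : I) (l : seq I) : I :=
  foldr (fun j b => if (f j < f b)%O then j else b) z l.

Lemma foldr_argmin_mem z l : foldr_argmin z l \in z :: l.
Proof.
elim: l => [|a l IH] /=; first exact: mem_head.
case: ifP => _; first by rewrite !inE eqxx orbT.
by move: IH; rewrite !inE => /orP [->|->]; rewrite ?orbT.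
Qed.

Lemma foldr_argmin_le z l j : j \in z :: l -> (f (foldr_argmin z l) <= f j)%O.
Proof.
elim: l j => [|a l IH] j /=; first by rewrite inE => /eqP ->.
rewrite !inE; set b := foldr_argmin z l.
have b_min u : u \in z :: l -> (f b <= f u)%O by apply: IH.
case: ltP => [ab|ba] /or3P [/eqP ->|/eqP ->|jl]; rewrite ?lexx //.
- by apply: le_trans (ltW ab) (b_min _ (mem_head _ _)).
- by apply: le_trans (ltW ab) (b_min _ _); rewrite inE jl orbT.
- exact: b_min (mem_head _ _).
- by apply: b_min; rewrite inE jl orbT.
Qed.

End ArgMin.

Lemma index_sorted {d} {T : orderType d} (x : T) (s : seq T) :
  sorted <=%O s -> x \in s -> index x s = count (< x)%O s.
Proof.
elim: s => //= a s IH s_sorted.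
have a_min : all (>= a)%O s := order_path_min le_trans s_sorted.
have [<- _|ax] := eqVneq a x.
  rewrite ltxx; apply/esym/eqP; rewrite -leqn0 leqNgt -has_count.
  by apply/hasPn => y /(allP a_min); rewrite /= leNgt => /negbTE ->.
rewrite inE eq_sym (negbTE ax) /= => xs.
by rewrite lt_neqAle ax (allP a_min x xs) IH //; apply: path_sorted s_sorted.
Qed.

Section Line.
Context {R : realFieldType}.
Implicit Types (S D A X : seq R) (a b r s t x y z : R).

Lemma perm_move1 S a b : a \in S -> perm_eq (move1 S a b) (b :: rem a S).
Proof. exact: perm_set_nth_index. Qed.

Lemma size_move1 S a b : a \in S -> size (move1 S a b) = size S.
Proof.
by move=> aS; rewrite (perm_size (perm_move1 b aS)) /= size_rem //; case: S aS.
Qed.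

Lemma mem_move1_new S a b : a \in S -> b \in move1 S a b.
Proof. by move=> aS; rewrite (perm_mem (perm_move1 b aS)) mem_head. Qed.

Lemma mem_move1 S a b x : a \in S -> x \in S -> x != a -> x \in move1 S a b.
Proof.
move=> aS xS xa; rewrite (perm_mem (perm_move1 b aS)) inE.
by move: xS; rewrite (perm_mem (perm_to_rem aS)) inE (negbTE xa) /= => ->; rewrite orbT.
Qed.

Lemma count_move1 (p : pred R) S a b :
  a \in S -> (count p (move1 S a b) + p a = count p S + p b)%N.
Proof.
by move=> aS; rewrite (permP (perm_move1 b aS)) (permP (perm_to_rem aS)) /=; lia.
Qed.

Lemma seq_max_mem a S : seq_max (a :: S) \in a :: S.
Proof. by have := foldr_max_mem a (a :: S); rewrite !inE orbA orbb. Qed.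

Lemma seq_min_mem a S : seq_min (a :: S) \in a :: S.
Proof. by have := foldr_min_mem a (a :: S); rewrite !inE orbA orbb. Qed.

Lemma between_le a b z : a <= b -> between a b z = (a <= z <= b).
Proof. by move=> ab; rewrite /between (min_l ab) (max_r ab). Qed.

Lemma between_ge a b z : b <= a -> between a b z = (b <= z <= a).
Proof. by move=> ba; rewrite /between (min_r ba) (max_l ba). Qed.

Lemma betweenN a b z : between (- a) (- b) (- z) = between a b z.
Proof. by rewrite /between -oppr_max -oppr_min !lerN2 andbC. Qed.

Lemma between_end a b : between a b b.
Proof. by rewrite /between ge_min le_max lexx !orbT. Qed.

Lemma between_trans r y s t : between r y s -> between r s t -> between r y t.
Proof.
case: (lerP r y) => [ry|/ltW yr].
  rewrite between_le // => /andP [rs sy].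
  by rewrite !between_le // => /andP [rt ts]; apply/andP; split; lra.
rewrite between_ge // => /andP [ys sr].
by rewrite !between_ge // => /andP [st tr]; apply/andP; split; lra.
Qed.

Lemma between_norm a b z : between a b z -> `|z - a| <= `|b - a|.
Proof.
case: (lerP a b) => [ab|/ltW ba].
  by rewrite between_le // => /andP [az zb]; rewrite !ger0_norm ?subr_ge0 //; lra.
by rewrite between_ge // => /andP [bz za]; rewrite !ler0_norm ?subr_le0 //; lra.
Qed.

Lemma between_norm_eq r s t : between r s t -> `|s - r| <= `|t - r| -> t = s.
Proof.
case: (lerP r s) => [rs|/ltW sr].
  by rewrite between_le // => /andP [rt ts]; rewrite !ger0_norm ?subr_ge0 //; lra.
by rewrite between_ge // => /andP [st tr]; rewrite !ler0_norm ?subr_le0 //; lra.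
Qed.

(* On a tie both neighbours of r reach it; the left one is counted. *)
Definition dc_serves_left D r : bool :=
  if r \in D then false else
  let L := [seq s <- D | s < r] in let Rs := [seq s <- D | r < s] in
  if L is [::] then false else if Rs is [::] then true
  else r - seq_max L <= seq_min Rs - r.

Lemma move_both_spec D r sL sR : sL \in D -> sR \in D -> sL < r -> r < sR ->
  let d := Num.min (r - sL) (sR - r) in
  let D' := move1 (move1 D sL (sL + d)) sR (sR - d) in
  [/\ size D' = size D, r \in D' &
      (count (< r) D' + (r - sL <= sR - r)%R = count (< r) D)%N].
Proof.
move=> sLD sRD sLr rsR d D'; rewrite {}/D'.
have sRD1 : sR \in move1 D sL (sL + d).
  by apply: mem_move1 => //; rewrite gt_eqF // (lt_trans sLr rsR).
have c1 := count_move1 (< r) (sL + d) sLD.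
have c2 := count_move1 (< r) (sR - d) sRD1.
rewrite /= sLr (lt_gtF rsR) in c1 c2.
have size_D' : size (move1 (move1 D sL (sL + d)) sR (sR - d)) = size D.
  by rewrite !size_move1.
case: (leP (r - sL) (sR - r)) => h.
  have dE : d = r - sL := min_l h.
  have sLd : sL + d = r by lra.
  have sRd : (sR - d < r) = false by apply/negbTE; rewrite -leNgt; lra.
  rewrite sLd ltxx sRd /= in c1 c2 sRD1 size_D' *; split=> //; last by lia.
  by apply: (mem_move1 _ sRD1); rewrite ?lt_eqF // mem_move1_new.
have dE : d = sR - r := min_r (ltW h).
have sLd : (sL + d < r) = true by lra.
have sRd : sR - d = r by lra.
rewrite sLd sRd ltxx /= in c1 c2 size_D' *; split=> //; last by lia.
exact: mem_move1_new.
Qed.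

Lemma dc_step_spec D r : D != [::] ->
  [/\ size (dc_step D r) = size D, r \in dc_step D r &
      (count (< r) (dc_step D r) + dc_serves_left D r = count (< r) D)%N].
Proof.
rewrite /dc_step /dc_serves_left; case: ifP => [//|rD D0]; first by rewrite addn0.
case hL: [seq s <- D | s < r] => [|l L]; case hR: [seq s <- D | r < s] => [|q Q].
- case: D D0 rD hL hR => // d D _ rD.
  have: d != r by apply: contraFneq rD => ->; apply: mem_head.
  by rewrite neq_lt => /orP [] dr /=; rewrite dr.
- have := seq_min_mem q Q; rewrite -hR mem_filter => /andP [rsR sRD].
  have := count_move1 (< r) r sRD; rewrite /= ltxx (lt_gtF rsR) /= !addn0 => <-.
  by split; [exact: size_move1 | exact: mem_move1_new |].
- have := seq_max_mem l L; rewrite -hL mem_filter => /andP [sLr sLD].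
  have := count_move1 (< r) r sLD; rewrite /= ltxx sLr /= addn0 => <-.
  by split; [exact: size_move1 | exact: mem_move1_new |].
have /andP [sLr sLD] : (seq_max (l :: L) < r) && (seq_max (l :: L) \in D).
  by rewrite -(mem_filter (fun s => s < r)) hL seq_max_mem.
have /andP [rsR sRD] : (r < seq_min (q :: Q)) && (seq_min (q :: Q) \in D).
  by rewrite -(mem_filter (fun s => r < s)) hR seq_min_mem.
exact: move_both_spec.
Qed.

Lemma count_lt_split r r' S : r < r' ->
  count (< r') S = (count (< r) S + count (fun x => (r <= x < r')%R) S)%N.
Proof.
move=> rr'; elim: S => //= x S ->; have [xr|rx] := ltrP x r.
  by rewrite (lt_trans xr rr') /=; lia.
by rewrite /=; lia.
Qed.

Lemma dc_serves_left_mono D r r' : r < r' ->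
  {in D, forall x, ~~ (r <= x < r')} ->
  dc_serves_left D r' -> dc_serves_left D r.
Proof.
move=> rr' gap; rewrite /dc_serves_left; case: ifP => [//|r'D].
have outside x : x \in D -> (x < r) || (r' < x).
  move=> xD; have r'x : (r' == x) = false by apply: contraFF r'D => /eqP ->.
  by have := gap x xD; rewrite negb_and -ltNge -leNgt le_eqVlt r'x.
rewrite ifF; last by apply: contraFF r'D => /outside; rewrite ltxx (lt_gtF rr').
have -> : [seq x <- D | x < r'] = [seq x <- D | x < r].
  apply: eq_in_filter => x /outside /orP [xr|r'x].
    by rewrite xr (lt_trans xr rr').
  by rewrite (lt_gtF r'x) (lt_gtF (lt_trans rr' r'x)).
have -> : [seq x <- D | r' < x] = [seq x <- D | r < x].
  apply: eq_in_filter => x /outside /orP [xr|r'x].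
    by rewrite (lt_gtF xr) (lt_gtF (lt_trans xr rr')).
  by rewrite r'x (lt_trans rr' r'x).
case: [seq x <- D | x < r] => [//|l L]; case: [seq x <- D | r < x] => [//|q Q].
by move=> h; lra.
Qed.

(* The index of r in the sorted configuration of DC after serving r. *)
Definition dc_rank D r : nat := count (< r) (dc_step D r).

Lemma dc_rank_mono D r r' : D != [::] -> r <= r' -> (dc_rank D r <= dc_rank D r')%N.
Proof.
rewrite /dc_rank => D0; rewrite le_eqVlt => /orP [/eqP <- //|rr'].
have [_ _ count_r] := dc_step_spec r D0; have [_ _ count_r'] := dc_step_spec r' D0.
have split_r' := count_lt_split D rr'.
have [gap|crossing] := eqVneq (count (fun x => r <= x < r') D) 0%N.
  have no_gap : {in D, forall x, ~~ (r <= x < r')}.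
    by apply/hasPn; rewrite has_count gap.
  have : (dc_serves_left D r' <= dc_serves_left D r)%N.
    by case: (dc_serves_left D r') (dc_serves_left_mono rr' no_gap) => // ->.
  lia.
have := leq_b1 (dc_serves_left D r'); lia.
Qed.

Definition nearest_between A r y s : Prop :=
  [/\ s \in A, between r y s &
      forall t, t \in A -> between r y t -> `|s - r| <= `|t - r|].

Lemma nearest_betweenN A r y s :
  nearest_between A r y s -> nearest_between (map -%R A) (- r) (- y) (- s).
Proof.
case=> sA rys s_near; split; rewrite ?(mem_map oppr_inj) ?betweenN //.
by move=> _ /mapP [t tA ->]; rewrite betweenN -!opprD !normrN; apply: s_near.
Qed.

Lemma nearest_between_adjacent A r y s : nearest_between A r y s -> adjacent A r s.
Proof.
case=> sA rys s_near; split=> // t tA ts; apply/negP => rst.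
by move: ts; rewrite (between_norm_eq rst (s_near t tA (between_trans rys rst))) eqxx.
Qed.

Lemma nearest_between_mono A r y s r' y' s' :
  nearest_between A r y s -> nearest_between A r' y' s' -> between r s r' ->
  (r <= r' -> y <= y') -> (r' <= r -> y' <= y) -> s' = s.
Proof.
wlog ry : A r y s r' y' s' / r <= y.
  move=> base ns ns' rsr' yy' y'y; case: (lerP r y) => [ry|/ltW yr].
    exact: base ns ns' rsr' yy' y'y.
  apply: oppr_inj; apply: (base (map -%R A) (- r) (- y) _ (- r') (- y'));
    rewrite ?lerN2 ?betweenN //; exact: nearest_betweenN.
move=> [sA rys s_near] [s'A r'y's' s'_near] rsr' le_yy' _.
move: rys; rewrite between_le // => /andP [rs sy].
move: rsr'; rewrite between_le // => /andP [rr' r's].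
have yy' := le_yy' rr'.
move: r'y's'; rewrite between_le => [/andP [r's' s'y']|]; last by lra.
have s's : s' <= s.
  have : `|s' - r'| <= `|s - r'|.
    by apply: s'_near => //; rewrite between_le; [apply/andP; split|]; lra.
  by rewrite !ger0_norm ?subr_ge0 //; lra.
have : `|s - r| <= `|s' - r|.
  by apply: s_near => //; rewrite between_le //; apply/andP; split; lra.
by rewrite !ger0_norm ?subr_ge0; lra.
Qed.

Lemma rmatched_nearest X A r : r \in X -> size X = size A ->
  nearest_between A r (nth 0 (sort <=%R A) (index r (sort <=%R X))) (rmatched X A r).
Proof.
move=> rX sizeXA; rewrite /rmatched /rcanonical_matching /canonical_matching.
set ys := sort _ A; set i0 := index r _; set y := ys`_i0.
set cands := [seq j <- _ | _].
have i0_lt : (i0 < size ys)%N.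
  by rewrite size_sort -sizeXA -(size_sort <=%R X) index_mem mem_sort.
have ysA j : (j < size ys)%N -> ys`_j \in A by move/(mem_nth 0); rewrite mem_sort.
have candE j : (j \in cands) = [&& j != i0, between r y ys`_j & (j < size ys)%N].
  by rewrite mem_filter mem_iota add0n leq0n -andbA.
have nearer t : t \in A -> between r y t -> t = y \/ index t ys \in cands.
  move=> tA ryt; have tys : t \in ys by rewrite mem_sort.
  have [ti0|ti0] := eqVneq (index t ys) i0; first by left; rewrite /y -ti0 nth_index.
  by right; rewrite candE ti0 nth_index // ryt index_mem.
case: cands candE nearer => [|j1 c] candE nearer /=; rewrite ?eqxx.
  split=> [||t tA /(nearer t tA) [->|] //]; [exact: ysA | exact: between_end].
have jm_mem := foldr_argmin_mem (fun j => `|ys`_j - r|) j1 (j1 :: c).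
have jm_min := foldr_argmin_le (fun j => `|ys`_j - r|) (z := j1) (l := j1 :: c).
rewrite /foldr_argmin /= in jm_mem jm_min.
set jm := (if _ then _ else _) in jm_mem jm_min *.
have : jm \in j1 :: c.
  by move: jm_mem; rewrite inE => /orP [/eqP ->|//]; apply: mem_head.
rewrite candE => /and3P [_ ryjm jm_lt].
split=> [||t tA /(nearer t tA) [->|tc]]; [exact: ysA | exact: ryjm | |].
  exact: between_norm.
have := jm_min (index t ys); rewrite nth_index ?mem_sort //; apply.
by rewrite inE tc orbT.
Qed.

Lemma dc_rank_lt D r : D != [::] -> (dc_rank D r < size D)%N.
Proof.
move=> D0; have [<- r_in _] := dc_step_spec r D0.
rewrite /dc_rank -(count_predC (< r)) -{1}[count _ _]addn0 ltn_add2l -has_count.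
by apply/hasP; exists r; rewrite //= ltxx.
Qed.

Lemma Aprime_server_nearest D A r : D != [::] -> size D = size A ->
  nearest_between A r (nth 0 (sort <=%R A) (dc_rank D r)) (Aprime_server D A r).
Proof.
move=> D0 sizeDA; have [size_dc r_in _] := dc_step_spec r D0.
have sort_dc : perm_eq (sort <=%R (dc_step D r)) (dc_step D r) by rewrite perm_sort.
rewrite /dc_rank -(permP sort_dc) -index_sorted ?mem_sort ?sort_sorted //.
  by apply: rmatched_nearest; rewrite // size_dc.
exact: le_total.
Qed.

Lemma size_trans_run_invariant k rs (p : seq R * seq R) : (0 < k)%N ->
  size p.1 = k -> size p.2 = k ->
  size (foldl (@trans_step R) p rs).1 = k /\ size (foldl (@trans_step R) p rs).2 = k.
Proof.
move=> k_gt0; elim: rs p => [|r rs IH] [D A] //= sizeD sizeA.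
have D0 : D != [::] by rewrite -size_eq0 sizeD -lt0n.
have [size_dc _ _] := dc_step_spec r D0.
have [sA _ _] := Aprime_server_nearest r D0 (etrans sizeD (esym sizeA)).
by apply: IH; rewrite /= ?size_dc ?size_move1.
Qed.

End Line.

Theorem lemma5 (R : realFieldType) (k : nat) (S0 rs : seq R) :
  (0 < k)%N -> size S0 = k ->
  let st := trans_run S0 rs in
  (forall r : R,
      lazy_step st.2 (trans_step st r).2 r /\
      adjacent st.2 r (Aprime_server st.1 st.2 r)) /\
  monotone_at st.1 st.2.
Proof.
move=> k_gt0 sizeS0 st.
have [sizeD sizeA] : size st.1 = k /\ size st.2 = k by apply: size_trans_run_invariant.
have D0 : st.1 != [::] by rewrite -size_eq0 sizeD -lt0n.
have sizeDA : size st.1 = size st.2 by rewrite sizeD sizeA.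
pose y r := nth 0 (sort <=%R st.2) (dc_rank st.1 r).
have near r : nearest_between st.2 r (y r) (Aprime_server st.1 st.2 r).
  exact: Aprime_server_nearest.
have y_mono r r' : r <= r' -> y r <= y r'.
  move=> rr'; apply: (sorted_leq_nth le_trans lexx 0 (sort_sorted le_total _));
    rewrite ?inE ?size_sort -?sizeDA ?dc_rank_lt //.
  exact: dc_rank_mono.
split=> [r|r r' rr'].
  split; last exact: nearest_between_adjacent (near r).
  by have [sA _ _] := near r; exists (Aprime_server st.1 st.2 r); last exact: perm_move1.
exact: nearest_between_mono (near r) (near r') rr' (y_mono r r') (y_mono r' r).
Qed.
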